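(* Let $n\ge 2$ be an integer and let $E$ be a nonsingular generalized Weierstrass elliptic curve over $\mathbb{Z}_n$. Then the number of (distinct) generalized Weierstrass elliptic curves over $\mathbb{Z}_n$ isomorphic to $E$ is $\frac{\Phi(n^4)}{|\mathrm{Aut}(E)|}$, where $\Phi$ is Euler's totient function.
   Context: A generalized Weierstrass curve over $\mathbb{Z}_n$ is $E: y^2+a_1xy+a_3y=x^3+a_2x^2+a_4x+a_6$ with $(a_1,a_2,a_3,a_4,a_6)\in\mathbb{Z}_n^5$ (distinct tuples give distinct curves). With $b_2=a_1^2+4a_2$, $b_4=2a_4+a_1a_3$, $b_6=a_3^2+4a_6$, $b_8=a_1^2a_6+4a_2a_6-a_1a_3a_4+a_2a_3^2-a_4^2$, its discriminant is $\Delta=-b_2^2b_8-8b_4^3-27b_6^2+9b_2b_4b_6$, and $E$ is nonsingular iff $\Delta\in\mathbb{Z}_n^*$. For $u\in\mathbb{Z}_n^*$ and $r,s,t\in\mathbb{Z}_n$, the change of variables $x=u^2x'+r$, $y=u^3y'+u^2sx'+t$ transforms $E$ into the curve with coefficients $a_i'$ determined by $ua_1'=a_1+2s$, $u^2a_2'=a_2-sa_1+3r-s^2$, $u^3a_3'=a_3+ra_1+2t$, $u^4a_4'=a_4-sa_3+2ra_2-(t+rs)a_1+3r^2-2st$, $u^6a_6'=a_6+ra_4+r^2a_2+r^3-ta_3-t^2-rta_1$. Two generalized curves are isomorphic if one is obtained from the other by such a transformation. $\mathrm{Aut}(E)$ is the set of such transformations (parametrized by $(u,r,s,t)\in\mathbb{Z}_n^*\times\mathbb{Z}_n^3$)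 mapping $E$ to itself. *)

From mathcomp Require Import all_boot all_order all_algebra.
Set Implicit Arguments. Unset Strict Implicit. Unset Printing Implicit Defensive.
Import GRing.Theory.
Local Open Scope ring_scope.

Definition wcurve (n : nat) := ('Z_n * 'Z_n * 'Z_n * 'Z_n * 'Z_n)%type.

Section W.
Variable n : nat.
Implicit Types E : wcurve n.

Definition a1 E := E.1.1.1.1.
Definition a2 E := E.1.1.1.2.
Definition a3 E := E.1.1.2.
Definition a4 E := E.1.2.
Definition a6 E := E.2.

Definition b2 E : 'Z_n := a1 E ^+ 2 + 4 * a2 E.
Definition b4 E : 'Z_n := 2 * a4 E + a1 E * a3 E.
Definition b6 E : 'Z_n := a3 E ^+ 2 + 4 * a6 E.
Definition b8 E : 'Z_n :=
  a1 E ^+ 2 * a6 E + 4 * a2 E * a6 E - a1 E * a3 E * a4 E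
  + a2 E * a3 E ^+ 2 - a4 E ^+ 2.

Definition disc E : 'Z_n :=
  - b2 E ^+ 2 * b8 E - 8 * b4 E ^+ 3 - 27 * b6 E ^+ 2 + 9 * b2 E * b4 E * b6 E.

Definition nonsingular E : bool := disc E \is a GRing.unit.

(* The curve obtained from E by the change of variables
   x = u^2 x' + r, y = u^3 y' + u^2 s x' + t  (u a unit). *)
Definition wtransform (u r s t : 'Z_n) E : wcurve n :=
  let a1 := a1 E in let a2 := a2 E in let a3 := a3 E in
  let a4 := a4 E in let a6 := a6 E in
  (u^-1 * (a1 + 2 * s),
   u^-1 ^+ 2 * (a2 - s * a1 + 3 * r - s ^+ 2),
   u^-1 ^+ 3 * (a3 + r * a1 + 2 * t),
   u^-1 ^+ 4 * (a4 - s * a3 + 2 * r * a2 - (t + r * s) * a1 + 3 * r ^+ 2 - 2 * s * t),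
   u^-1 ^+ 6 * (a6 + r * a4 + r ^+ 2 * a2 + r ^+ 3 - t * a3 - t ^+ 2 - r * t * a1)).

Definition wiso E E' : bool :=
  [exists p : 'Z_n * 'Z_n * 'Z_n * 'Z_n,
     (p.1.1.1 \is a GRing.unit) && (wtransform p.1.1.1 p.1.1.2 p.1.2 p.2 E == E')].

Definition Aut E : {set 'Z_n * 'Z_n * 'Z_n * 'Z_n} :=
  [set p | (p.1.1.1 \is a GRing.unit) && (wtransform p.1.1.1 p.1.1.2 p.1.2 p.2 E == E)].

End W.

From mathcomp Require Import all_boot all_order all_algebra.
From mathcomp Require Import ring zify.

(* The admissible changes of variables (u, r, s, t) form a group under
   composition, of order phi(n) n^3 = phi(n^4), acting on the generalized
   Weierstrass curves over Z_n.  The curves isomorphic to E form the orbit of E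
   and Aut(E) is its stabilizer, so the count is orbit-stabilizer; the fiber of
   the orbit map over the image of q is the coset Aut(E) q. *)

Set Implicit Arguments.
Unset Strict Implicit.
Unset Printing Implicit Defensive.

Import GRing.Theory.
Local Open Scope ring_scope.

Lemma card_uniform_fibers (aT rT : finType) (f : aT -> rT) (D : {set aT}) k :
  {in D, forall x, #|[set y in D | f y == f x]| = k} ->
  #|D| = (#|f @: D| * k)%N.
Proof.
move=> fiberK; rewrite -sum1_card (partition_big f (mem (f @: D))) /=; last first.
  by move=> x Dx; apply: imset_f.
rewrite -sum_nat_const; apply: eq_bigr => _ /imsetP [x Dx ->].
by rewrite -(fiberK x Dx) -sum1_card; apply: eq_bigl => y; rewrite inE.
Qed.

Lemma totientXS m k : (0 < m)%N -> totient (m ^ k.+1) = (m ^ k * totient m)%N.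
Proof.
move=> m_gt0; rewrite !totientE ?expn_gt0 ?m_gt0 // primesX //.
have m_powE : (m ^ k = \prod_(p <- primes m) p ^ (logn p m * k))%N.
  rewrite {1}(prod_prime_decomp m_gt0) prime_decompE big_map /=.
  by elim/big_rec2: _ => [|p x y _ <-]; rewrite ?exp1n // expnMn expnM.
rewrite m_powE -big_split /= !big_seq; apply: eq_bigr => p.
rewrite -logn_gt0 lognX => logp_gt0; rewrite mulnCA -expnD.
by congr (_ * _ ^ _)%N; lia.
Qed.

Section ChangeOfVariables.
Variable n : nat.
Implicit Types E : wcurve n.

Definition chv := ('Z_n * 'Z_n * 'Z_n * 'Z_n)%type.
Implicit Types p q : chv.

Definition chv_unit p := p.1.1.1 \is a GRing.unit.
Definition chv_units := [set p | chv_unit p].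
Definition chv_act p E := wtransform p.1.1.1 p.1.1.2 p.1.2 p.2 E.

Definition chv1 : chv := (1, 0, 0, 0).

(* Applying [chv_mul p q] means applying p, then q. *)
Definition chv_mul p q : chv :=
  let: (u, r, s, t) := p in let: (u', r', s', t') := q in
  (u * u', r + u ^+ 2 * r', s + u * s', t + s * u ^+ 2 * r' + u ^+ 3 * t').

Definition chv_inv p : chv :=
  let: (u, r, s, t) := p in
  (u^-1, - (u^-1 ^+ 2 * r), - (u^-1 * s), u^-1 ^+ 3 * (s * r - t)).

Lemma chv_unitM p q : chv_unit p -> chv_unit q -> chv_unit (chv_mul p q).
Proof.
by case: p q => [[[u r] s] t] [[[u' r'] s'] t']; rewrite /chv_unit unitrM => ->.
Qed.

Lemma chv_unitV p : chv_unit p -> chv_unit (chv_inv p).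
Proof. by case: p => [[[u r] s] t]; rewrite /chv_unit unitrV. Qed.

Lemma chv_mulA : associative chv_mul.
Proof.
move=> [[[u1 r1] s1] t1] [[[u2 r2] s2] t2] [[[u3 r3] s3] t3] /=.
congr (_, _, _, _); ring.
Qed.

Lemma chv_mul1p : left_id chv1 chv_mul.
Proof. by move=> [[[u r] s] t] /=; congr (_, _, _, _); ring. Qed.

Lemma chv_mulp1 : right_id chv1 chv_mul.
Proof. by move=> [[[u r] s] t] /=; congr (_, _, _, _); ring. Qed.

Lemma chv_mulVp p : chv_unit p -> chv_mul (chv_inv p) p = chv1.
Proof.
case: p => [[[u r] s] t] /= Uu; rewrite mulVr //.
by congr (_, _, _, _); ring.
Qed.

Lemma chv_mulpV p : chv_unit p -> chv_mul p (chv_inv p) = chv1.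
Proof.
move=> Up; have UVp := chv_unitV Up.
rewrite -[LHS]chv_mul1p -(chv_mulVp UVp) -chv_mulA [chv_mul (chv_inv p) _]chv_mulA.
by rewrite chv_mulVp // chv_mul1p chv_mulVp.
Qed.

Lemma chv_mulIp q : chv_unit q -> injective (chv_mul^~ q).
Proof.
move=> Uq a b /(congr1 (chv_mul^~ (chv_inv q))) /=.
by rewrite -!chv_mulA chv_mulpV // !chv_mulp1.
Qed.

Lemma chv_act1 E : chv_act chv1 E = E.
Proof.
case: E => [[[[e1 e2] e3] e4] e6].
rewrite /chv_act /wtransform /a1 /a2 /a3 /a4 /a6 /= invr1.
by congr (_, _, _, _, _); ring.
Qed.

Lemma chv_actM p q E : chv_unit p -> chv_unit q ->
  chv_act (chv_mul p q) E = chv_act q (chv_act p E).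
Proof.
case: p q => [[[u r] s] t] [[[u' r'] s'] t']; rewrite /chv_unit /= => Uu Uu'.
have unscale k x : u^-1 ^+ k * (u ^+ k * x) = x.
  by rewrite mulrA -exprMn mulVr // expr1n mul1r.
(* Writing the parameters of the second change as u^-k (u^k x) turns the
   composition law into a polynomial identity in u^-1 and u'^-1. *)
rewrite -[in RHS](unscale 2 r') -[in RHS](unscale 1 s') -[in RHS](unscale 3 t').
case: E => [[[[e1 e2] e3] e4] e6].
rewrite /chv_act /wtransform /a1 /a2 /a3 /a4 /a6 /= invrM //.
move: (u^-1) (u'^-1) => w w'.
by congr (_, _, _, _, _); ring.
Qed.

Lemma chv_actK q E : chv_unit q -> chv_act (chv_inv q) (chv_act q E) = E.
Proof. by move=> Uq; rewrite -chv_actM ?chv_unitV // chv_mulpV // chv_act1. Qed.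

Lemma in_Aut E p : (p \in Aut E) = chv_unit p && (chv_act p E == E).
Proof. by rewrite inE. Qed.

Lemma wiso_orbit E : [set E' | wiso E E'] = (chv_act^~ E) @: chv_units.
Proof.
apply/setP => E'; rewrite inE; apply/existsP/imsetP.
  by case=> p /andP [Up /eqP <-]; exists p; rewrite ?inE.
by case=> p; rewrite inE => Up ->; exists p; apply/andP.
Qed.

Lemma chv_fiber E q : chv_unit q ->
  [set p in chv_units | chv_act p E == chv_act q E] = (chv_mul^~ q) @: Aut E.
Proof.
move=> Uq; apply/setP => p; rewrite !inE; apply/andP/imsetP.
  case=> Up /eqP actp; exists (chv_mul p (chv_inv q)).
    rewrite in_Aut chv_unitM ?chv_unitV //=.
    by rewrite chv_actM ?chv_unitV // actp chv_actK.
  by rewrite -chv_mulA chv_mulVp // chv_mulp1.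
case=> a; rewrite in_Aut => /andP [Ua /eqP actE] ->.
by rewrite chv_unitM // chv_actM // [chv_act a E]actE.
Qed.

Lemma card_chv_fiber E q : chv_unit q ->
  #|[set p in chv_units | chv_act p E == chv_act q E]| = #|Aut E|.
Proof. by move=> Uq; rewrite chv_fiber // card_imset //; apply: chv_mulIp. Qed.

Lemma Aut_gt0 E : (0 < #|Aut E|)%N.
Proof.
by apply/card_gt0P; exists chv1; rewrite in_Aut chv_act1 eqxx andbT; apply: unitr1.
Qed.

Lemma card_chv_units : (1 < n)%N -> #|chv_units| = totient (n ^ 4).
Proof.
move=> n_gt1.
have -> : chv_units = setX (setX (setX [set u : 'Z_n | u \is a GRing.unit] setT) setT) setT.
  by apply/setP => [[[[u r] s] t]]; rewrite !inE /= !andbT.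
have card_Zn : #|'Z_n| = n by rewrite card_ord Zp_cast.
have card_units : #|[set u : 'Z_n | u \is a GRing.unit]| = totient n.
  by rewrite -card_units_Zp 1?ltnW // cardsT card_sub cardsE.
rewrite !cardsX !cardsT card_Zn card_units totientXS 1?ltnW //; lia.
Qed.

End ChangeOfVariables.

Theorem theorem11 (n : nat) (hn : (1 < n)%N) (E : wcurve n) :
  nonsingular E ->
  #|[set E' : wcurve n | wiso E E']| = (totient (n ^ 4) %/ #|Aut E|)%N.
Proof.
move=> _.
rewrite wiso_orbit -card_chv_units //.
rewrite (@card_uniform_fibers _ _ (fun p => chv_act p E) (chv_units n) #|Aut E|).
  by rewrite mulnK // Aut_gt0.
by move=> q; rewrite inE => Uq; apply: card_chv_fiber.
Qed.
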